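(* Let $\mathcal{A}$ be a family of finite subsets of $\omega_1$ closed under taking subsets and containing all singletons, and let $\mathcal{D}$ be a family of finite sets of consecutive pairs containing every single pair of $\omega_1$. Then $(\mathcal{X}_{\mathcal{A},\mathcal{D}},\|\cdot\|_{\mathcal{A},\mathcal{D}})$ is a Hilbert generated Banach space.
   Context: $c_{00}(\omega_1)$ is the set of finitely supported $x\in\mathbb{R}^{\omega_1}$; $\|x\|_\mathcal{A}=\sup_{A\in\mathcal{A}}\sqrt{\sum_{\alpha\in A}x(\alpha)^2}$. A set of consecutive pairs is a set $D$ of two-element subsets of $\omega_1$ such that for distinct $a,b\in D$, $\max a<\min b$ or $\max b<\min a$; ''$\mathcal{D}$ contains every single pair'' means $\{p\}\in\mathcal{D}$ for every two-element $p\subseteq\omega_1$. $\nu_\mathcal{D}(x)=\sup_{D\in\mathcal{D}}\sqrt{\sum_{\{\alpha,\beta\}\in D}|x(\alpha)-x(\beta)|^2}$, $\|x\|_{\mathcal{A},\mathcal{D}}=\nu_\mathcal{D}(x)+\|x\|_\mathcal{A}$, and $\mathcal{X}_{\mathcal{A},\mathcal{D}}$ is the completion of $c_{00}(\omega_1)$ with respect to $\|\cdot\|_{\mathcal{A},\mathcal{D}}$ (realized as the closure of $c_{00}(\omega_1)$ in $\{x\in\mathbb{R}^{\omega_1}:\|x\|_{\mathcal{A},\mathcal{D}}<\infty\}$). A Banach space is Hilbert generated if it is the dense range of a bounded linear operator from a Hilbert space. *)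

From HB Require Import structures.
From mathcomp Require Import all_boot all_order all_algebra.
From mathcomp Require Import all_classical all_reals all_analysis.
Set Implicit Arguments. Unset Strict Implicit. Unset Printing Implicit Defensive.
Import Order.TTheory GRing.Theory Num.Theory.
Import numFieldNormedType.Exports.
Local Open Scope classical_set_scope.
Local Open Scope ring_scope.

Section Defs.
Context {d : Order.disp_t} (W : orderType d) (R : realType).

Definition is_omega1 : Prop :=
  [/\ well_founded (fun a b : W => (a < b)%O),
      ~ countable [set: W]
    & forall a : W, countable [set b : W | (b < a)%O]].

(* A pair {a,b} with a < b is represented as the ordered pair (a,b). *)
Definition consecutive_pairs (P : set (W * W)) : Prop :=
  (forall p, P p -> (p.1 < p.2)%O) /\
  (forall p q, P p -> P q -> p <> q -> (p.2 < q.1)%O \/ (q.2 < p.1)%O).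

Definition c00 : set (W -> R) := [set x | finite_set [set a | x a != 0]].

Definition normA (A : set (set W)) (x : W -> R) : \bar R :=
  ereal_sup [set (Num.sqrt (\sum_(a \in S) x a ^+ 2))%:E | S in A].

Definition nuD (D : set (set (W * W))) (x : W -> R) : \bar R :=
  ereal_sup [set (Num.sqrt (\sum_(p \in P) (x p.1 - x p.2) ^+ 2))%:E | P in D].

Definition normAD A D (x : W -> R) : \bar R := (nuD D x + normA A x)%E.

Definition XAD A D : set (W -> R) :=
  [set x | (normAD A D x < +oo)%E /\
     forall eps : R, 0 < eps ->
       exists y, c00 y /\ (normAD A D (fun w => (x w - y w)%R) < eps%:E)%E].

Definition banach_subspace (N : (W -> R) -> \bar R) (X : set (W -> R)) : Prop :=
  X (fun _ => 0) /\
      (forall (a : R) x y, X x -> X y -> X (fun w => a * x w + y w)) /\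
      (forall x, X x -> (N x < +oo)%E) /\
      (forall x, X x -> (N x = 0)%E -> forall w, x w = 0) /\
      (forall (a : R) x, X x -> N (fun w => (a * x w)%R) = (`|a|%:E * N x)%E) /\
      (forall x y, X x -> X y -> (N (fun w => (x w + y w)%R) <= N x + N y)%E)
    /\ (forall u : nat -> W -> R, (forall n, X (u n)) ->
        (forall eps : R, 0 < eps -> exists M, forall m n, (M <= m)%N -> (M <= n)%N ->
            (N (fun w => (u m w - u n w)%R) < eps%:E)%E) ->
        exists x, X x /\ forall eps : R, 0 < eps -> exists M, forall n, (M <= n)%N ->
            (N (fun w => (u n w - x w)%R) < eps%:E)%E).

End Defs.

Definition inner_product_of (R : realType) (H : normedModType R) (ip : H -> H -> R) : Prop :=
  [/\ (forall u v, ip u v = ip v u),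
      (forall (a : R) u v w, ip (a *: u + v) w = a * ip u w + ip v w)
    & (forall u, `|u| = Num.sqrt (ip u u))].

Definition hilbert_generated {d : Order.disp_t} (W : orderType d) (R : realType)
    (N : (W -> R) -> \bar R) (X : set (W -> R)) : Prop :=
  exists (H : completeNormedModType R) (ip : H -> H -> R),
    inner_product_of ip /\
    exists T : H -> (W -> R),
      [/\ (forall (a : R) u v, T (a *: u + v) = (fun w => (a * T u w + T v w)%R)),
          (exists C : R, forall u, (N (T u) <= (C * `|u|)%:E)%E),
          (forall u, X (T u))
        & (forall x, X x -> forall eps : R, 0 < eps ->
            exists u, (N (fun w => (x w - T u w)%R) < eps%:E)%E)].

From HB Require Import structures.
From mathcomp Require Import all_boot all_order all_algebra.
From mathcomp Require Import all_classical all_reals all_analysis.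
From mathcomp Require Import ring lra.
Set Implicit Arguments. Unset Strict Implicit. Unset Printing Implicit Defensive.
Import Order.TTheory GRing.Theory Num.Theory.
Import numFieldNormedType.Exports.
Local Open Scope classical_set_scope.
Local Open Scope ring_scope.

(* Both nu_D and ||.||_A are suprema of families of seminorms, each bounded by a
   finite sum of moduli of coordinates, and the family defining ||.||_A contains
   every coordinate functional |x(w)|.  Such a supremum is a norm on the space
   where it is finite, and that space is complete: a Cauchy net converges
   coordinatewise, and a seminorm depending on finitely many coordinates passes
   to the coordinatewise limit.  Taking all finite sets instead of A gives
   l2(omega_1); it is a Hilbert space because its squared norm is the limit of
   the finite sums of squares along the finite sets, so the polarization identity
   passes to the limit.  The pairs of a set in D are pairwise disjoint and
   (s - t)^2 <= 2 s^2 + 2 t^2, hence nu_D <= 2 ||.||_2, while ||.||_A <= ||.||_2.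
   So the inclusion of l2(omega_1) into X_{A,D} is bounded, and its range
   contains the dense subspace c00. *)

Section SumOfSquares.
Context {R : realType} {I : Type}.
Implicit Types (s : seq I) (f h : I -> R).

Lemma sumr_sqr_ge0 s f : 0 <= \sum_(i <- s) f i ^+ 2.
Proof. by apply: sumr_ge0 => i _; exact: sqr_ge0. Qed.

Lemma sqrt_sum_sqr_le_sum_norm s f :
  Num.sqrt (\sum_(i <- s) f i ^+ 2) <= \sum_(i <- s) `|f i|.
Proof.
have norm_sum_ge0 s' : 0 <= \sum_(i <- s') `|f i| by apply: sumr_ge0.
rewrite -(ger0_norm (norm_sum_ge0 s)) -sqrtr_sqr; apply: ler_wsqrtr.
elim: s => [|i s IH]; first by rewrite !big_nil expr0n.
rewrite !big_cons -[f i ^+ 2]real_normK ?num_real //.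
have := norm_sum_ge0 s; have := normr_ge0 (f i); nra.
Qed.

Lemma sum_sqrD s f h t : \sum_(i <- s) (t * f i + h i) ^+ 2 =
  t ^+ 2 * \sum_(i <- s) f i ^+ 2 + 2 * t * \sum_(i <- s) f i * h i
  + \sum_(i <- s) h i ^+ 2.
Proof.
rewrite !mulr_sumr -!big_split /=; apply: eq_bigr => i _; ring.
Qed.

Lemma CauchySchwarz_sum s f h : (\sum_(i <- s) f i * h i) ^+ 2 <=
  (\sum_(i <- s) f i ^+ 2) * (\sum_(i <- s) h i ^+ 2).
Proof.
set A := \sum_(i <- s) f i ^+ 2; set B := \sum_(i <- s) h i ^+ 2.
set C := \sum_(i <- s) f i * h i.
(* t |-> \sum_i (t f i + h i)^2 is a nonnegative quadratic, so its discriminant is <= 0. *)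
pose p : {poly R} := Poly [:: B; 2 * C; A].
have p_ge0 t : 0 <= p.[t].
  have -> : p.[t] = t ^+ 2 * A + 2 * t * C + B.
    by rewrite /p !horner_Poly /= mul0r add0r; ring.
  rewrite -sum_sqrD; exact: sumr_sqr_ge0.
have p2_ge0 : 0 <= p`_2 by rewrite coef_Poly; exact: sumr_sqr_ge0.
have := @deg_le2_poly_delta_ge0 _ p (size_Poly _) p2_ge0 p_ge0.
rewrite !coef_Poly /=.
by rewrite exprMn -mulrA -natrX -mulrBr pmulr_rle0 // subr_le0.
Qed.

Lemma minkowski_sum s f h : Num.sqrt (\sum_(i <- s) (f i + h i) ^+ 2) <=
  Num.sqrt (\sum_(i <- s) f i ^+ 2) + Num.sqrt (\sum_(i <- s) h i ^+ 2).
Proof.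
have := CauchySchwarz_sum s f h; have := sum_sqrD s f h 1.
under eq_bigr do rewrite mul1r.
rewrite expr1n mul1r mulr1 => ->.
set A := \sum_(i <- s) f i ^+ 2; set B := \sum_(i <- s) h i ^+ 2.
set C := \sum_(i <- s) f i * h i => CS.
have A0 : 0 <= A by exact: sumr_sqr_ge0.
have B0 : 0 <= B by exact: sumr_sqr_ge0.
have C_le : C <= Num.sqrt A * Num.sqrt B.
  rewrite -sqrtrM //; apply: le_trans (ler_norm C) _.
  by rewrite -sqrtr_sqr; exact: ler_wsqrtr.
have := sqr_sqrtr A0; have := sqr_sqrtr B0.
have := sqrtr_ge0 A; have := sqrtr_ge0 B.
rewrite -(ger0_norm (addr_ge0 (sqrtr_ge0 A) (sqrtr_ge0 B))) -sqrtr_sqr.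
move=> sB sA eB eA; apply: ler_wsqrtr; clearbody A B C; nra.
Qed.

End SumOfSquares.

Section FiniteSums.
Context {T : choiceType} {R : realType}.
Implicit Types (S : set T) (f : T -> R).

Lemma ler_fsum_subset S0 S f : finite_set S -> S0 `<=` S ->
  (forall i, S i -> 0 <= f i) -> \sum_(i \in S0) f i <= \sum_(i \in S) f i.
Proof.
move=> S_fin sub f_ge0; rewrite (fsbigID S0 _ _ S_fin) setIidr // lerDl.
by apply: fsumr_ge0 => i [Si _]; exact: f_ge0.
Qed.

End FiniteSums.

Lemma EFin_ub_of_lty {R : realType} (x : \bar R) :
  (x < +oo)%E -> exists r : R, (x < r%:E)%E.
Proof.
case: x => [r _|//|_]; last by exists 0; exact: ltNyr.
by exists (r + 1); rewrite lte_fin ltrDl.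
Qed.

Section SupNorm.
Context {W : choiceType} {R : realType}.
Local Notation V := (W -> R).
Implicit Types (P : set (V -> R)) (p : V -> R) (u v x : V).

Definition sup_norm P u : \bar R := ereal_sup [set (p u)%:E | p in P].

Definition seminorm_family P :=
  [/\ P !=set0,
      (forall p, P p -> forall (a : R) u, p (a *: u) = `|a| * p u),
      (forall p, P p -> forall u v, p (u + v) <= p u + p v) &
      (forall p, P p -> exists ws : seq W, forall u, p u <= \sum_(w <- ws) `|u w|)].

Definition norming_family P :=
  seminorm_family P /\ forall w, exists2 p, P p & forall u, `|u w| <= p u.

Lemma seminorm_family_ge0 P p u : seminorm_family P -> P p -> 0 <= p u.
Proof.
case=> _ pZ pD _ Pp; have := pD _ Pp u ((-1) *: u).
rewrite pZ // normrN normr1 mul1r scaleN1r subrr -[0 : V](scale0r u) pZ //.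
by rewrite normr0 mul0r; lra.
Qed.

Lemma sup_norm_ub P p u : P p -> ((p u)%:E <= sup_norm P u)%E.
Proof. by move=> Pp; apply: ereal_sup_ubound; exists p. Qed.

Lemma sup_norm_leP P u r : (sup_norm P u <= r%:E)%E <-> forall p, P p -> p u <= r.
Proof.
split=> [le_r p Pp|le_r]; first by rewrite -lee_fin (le_trans (sup_norm_ub u Pp)).
by apply/ereal_supP => _ [p Pp <-]; rewrite lee_fin le_r.
Qed.

Section SeminormFamily.
Variables (P : set (V -> R)) (P_semi : seminorm_family P).

Lemma sup_norm_ge0 u : (0 <= sup_norm P u)%E.
Proof.
have [[p Pp] _ _ _] := P_semi.
by rewrite (le_trans _ (sup_norm_ub u Pp)) // lee_fin (seminorm_family_ge0 _ P_semi).
Qed.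

Lemma sup_norm_fineK u : (sup_norm P u < +oo)%E -> (fine (sup_norm P u))%:E = sup_norm P u.
Proof. by move=> lt_oo; rewrite fineK // ge0_fin_numE // sup_norm_ge0. Qed.

Lemma sup_normZ (a : R) u : sup_norm P (a *: u) = (`|a|%:E * sup_norm P u)%E.
Proof.
have [[p0 Pp0] pZ _ _] := P_semi.
rewrite /sup_norm -ereal_supZl //; last by apply/set0P; exists (p0 u)%:E, p0.
congr ereal_sup; rewrite !image_comp; apply: eq_imagel => p Pp /=.
by rewrite pZ.
Qed.

Lemma sup_normN u : sup_norm P (- u) = sup_norm P u.
Proof. by rewrite -scaleN1r sup_normZ normrN normr1 mul1e. Qed.

Lemma sup_norm0 : sup_norm P 0 = 0%E.
Proof. by rewrite -(scale0r (0 : V)) sup_normZ normr0 mul0e. Qed.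

Lemma sup_normD u v : (sup_norm P (u + v)%R <= sup_norm P u + sup_norm P v)%E.
Proof.
have [_ _ pD _] := P_semi; apply/ereal_supP => _ [p Pp <-].
by rewrite (le_trans _ (leeD (sup_norm_ub u Pp) (sup_norm_ub v Pp))) // lee_fin pD.
Qed.

Lemma sup_norm_lin_lt (a : R) u v r s :
  (sup_norm P u < r%:E)%E -> (sup_norm P v < s%:E)%E ->
  (sup_norm P (a *: u + v)%R < (`|a| * r + s)%:E)%E.
Proof.
move=> lt_r lt_s.
have finite_norm y t : (sup_norm P y < t%:E)%E -> exists n, sup_norm P y = n%:E.
  move=> lt_t; exists (fine (sup_norm P y)).
  by rewrite sup_norm_fineK // (lt_trans lt_t) ?ltry.
have [[nu Eu] [nv Ev]] := (finite_norm _ _ lt_r, finite_norm _ _ lt_s).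
apply: le_lt_trans (sup_normD _ _) _.
rewrite sup_normZ Eu Ev -EFinM -EFinD lte_fin.
rewrite Eu lte_fin in lt_r; rewrite Ev lte_fin in lt_s.
by rewrite ler_ltD // ler_wpM2l // ltW.
Qed.

Lemma sup_norm_le_lim (F : set_system V) (FF : ProperFilter F) x u (e : R) :
  (forall w, (fun v : V => v w) @ F --> x w) ->
  (\forall v \near F, (sup_norm P (u - v)%R <= e%:E)%E) ->
  (sup_norm P (u - x)%R <= e%:E)%E.
Proof.
move=> Fx near_e; apply/sup_norm_leP => p Pp.
have [_ _ pD pfin] := P_semi; have [ws ws_dom] := pfin p Pp.
have coord_cvg w : `|v w - x w| @[v --> F] --> 0.
  rewrite -(@normr0 _ R) -(subrr (x w)); apply: cvg_norm; apply: cvgB => //.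
  exact: cvg_cst.
have := @cvg_big _ _ +%R 0 xpredT add_continuous _ F ws
  (fun w v => `|v w - x w|) (fun=> 0) FF (fun w _ => coord_cvg w).
rewrite big1 // => sum_cvg.
rewrite -subr_le0; apply: (cvgr_to_ge sum_cvg).
apply: filterS near_e => v /sup_norm_leP le_e; rewrite lerBlDl.
have -> : u - x = (u - v) + (v - x) by rewrite addrA subrK.
by apply: le_trans (pD _ Pp _ _) _; apply: lerD; [exact: le_e | exact: ws_dom].
Qed.

End SeminormFamily.

Lemma le_sup_norm P Q u : P `<=` Q -> (sup_norm P u <= sup_norm Q u)%E.
Proof. by move=> PQ; apply/ereal_sup_le/image_subset. Qed.

Lemma sup_norm_coord P u w : norming_family P -> (`|u w|%:E <= sup_norm P u)%E.
Proof.
case=> _ coord; have [p Pp le_p] := coord w.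
by rewrite (le_trans _ (sup_norm_ub u Pp)) // lee_fin.
Qed.

Lemma sup_norm_eq0 P u : norming_family P -> sup_norm P u = 0%E -> u = 0.
Proof.
move=> P_norm u0; apply/funext => w; apply/normr0_eq0/le_anti.
by rewrite normr_ge0 andbT -lee_fin; have := sup_norm_coord u w P_norm; rewrite u0.
Qed.

Section Completeness.
Variables (P : set (V -> R)) (P_norm : norming_family P).
Variables (F : set_system V) (FF : ProperFilter F).
Hypothesis F_cauchy : forall e, 0 < e ->
  exists2 B, F B & forall u v, B u -> B v -> (sup_norm P (u - v)%R < e%:E)%E.

Lemma cauchy_coord_cvg w : cvg ((fun v : V => v w) @ F).
Proof.
apply: cauchy_cvg; apply: cauchy_exP => e e_gt0.
have [B FB B_small] := F_cauchy e_gt0; have [u0 Bu0] := filter_ex FB.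
exists (u0 w); suff : F [set v : V | ball (u0 w) e (v w)] by [].
apply: filterS FB => v Bv /=; rewrite -ball_normE /ball_ /= -lte_fin.
exact: le_lt_trans (sup_norm_coord (u0 - v) w P_norm) (B_small _ _ Bu0 Bv).
Qed.

Lemma sup_norm_complete :
  exists x, forall e, 0 < e -> F [set u | (sup_norm P (u - x)%R < e%:E)%E].
Proof.
exists (fun w => lim ((fun v : V => v w) @ F)) => e e_gt0.
have [B FB B_small] := F_cauchy (divr_gt0 e_gt0 (ltr0Sn _ 1)).
apply: filterS (FB) => u Bu /=.
apply: (@le_lt_trans _ _ (e / 2)%:E); last by rewrite lte_fin; lra.
apply: (sup_norm_le_lim P_norm.1 FF) => [w|]; first exact: cauchy_coord_cvg.
by apply: filterS FB => v Bv; exact/ltW/B_small.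
Qed.

End Completeness.

Definition sum_family P1 P2 : set (V -> R) :=
  [set (fun u => p1 u + p2 u) | p1 in P1 & p2 in P2].

Lemma norming_sum_family P1 P2 :
  seminorm_family P1 -> norming_family P2 -> norming_family (sum_family P1 P2).
Proof.
move=> P1_semi [P2_semi coord2]; have [[p1 P1p1] Z1 D1 fin1] := P1_semi.
have [[p2 P2p2] Z2 D2 fin2] := P2_semi.
split; [split|].
- by exists (fun u => p1 u + p2 u), p1 => //; exists p2.
- by move=> _ [q1 Pq1 [q2 Pq2 <-]] a u; rewrite Z1 // Z2 // mulrDr.
- move=> _ [q1 Pq1 [q2 Pq2 <-]] u v.
  by rewrite addrACA; apply: lerD; [exact: D1|exact: D2].
- move=> _ [q1 Pq1 [q2 Pq2 <-]].
  have [ws1 dom1] := fin1 _ Pq1; have [ws2 dom2] := fin2 _ Pq2.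
  by exists (ws1 ++ ws2) => u; rewrite big_cat; apply: lerD.
- move=> w; have [q2 Pq2 le_q2] := coord2 w.
  exists (fun u => p1 u + q2 u); first by exists p1 => //; exists q2.
  move=> u; rewrite -[leLHS]add0r; apply: lerD => //.
  exact: (seminorm_family_ge0 _ P1_semi).
Qed.

Lemma sup_norm_sum_family P1 P2 u : seminorm_family P1 -> seminorm_family P2 ->
  sup_norm (sum_family P1 P2) u = (sup_norm P1 u + sup_norm P2 u)%E.
Proof.
move=> P1_semi P2_semi; set s := sup_norm (sum_family P1 P2) u.
have sum_le p1 p2 : P1 p1 -> P2 p2 -> ((p1 u)%:E + (p2 u)%:E <= s)%E.
  move=> P1p1 P2p2; rewrite -EFinD.
  by apply: (sup_norm_ub (p := fun v => p1 v + p2 v)); exists p1 => //; exists p2.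
apply/le_anti/andP; split.
  by apply/ereal_supP => _ [_ [p1 P1p1 [p2 P2p2 <-]] <-]; rewrite EFinD leeD // sup_norm_ub.
have le1 p2 : P2 p2 -> (sup_norm P1 u + (p2 u)%:E <= s)%E.
  move=> P2p2; rewrite -leeBrDr //; apply/ereal_supP => _ [p1 P1p1 <-].
  by rewrite leeBrDr // sum_le.
have [s1_fin|s1_oo] : sup_norm P1 u \is a fin_num \/ sup_norm P1 u = +oo%E.
  by case: (sup_norm P1 u) (sup_norm_ge0 P1_semi u) => [r||] //; [left|right].
- rewrite addeC -leeBrDr //; apply/ereal_supP => _ [p2 P2p2 <-].
  by rewrite leeBrDr // addeC le1.
- have [[p2 P2p2] _ _ _] := P2_semi.
  by move: (le1 p2 P2p2); rewrite s1_oo addye // leye_eq => /eqP ->; exact: leey.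
Qed.

End SupNorm.

Section SquareSumFamily.
Context {W I : choiceType} {R : realType}.
Local Notation V := (W -> R).
Variables (F : set (set I)) (g : V -> I -> R).

Definition sqsum_family : set (V -> R) :=
  [set (fun u => Num.sqrt (\sum_(i \in S) g u i ^+ 2)) | S in F].

Lemma sup_norm_sqsum_family u : sup_norm sqsum_family u =
  ereal_sup [set (Num.sqrt (\sum_(i \in S) g u i ^+ 2))%:E | S in F].
Proof. by rewrite /sup_norm image_comp. Qed.

Lemma seminorm_sqsum_family :
  F !=set0 -> (forall S, F S -> finite_set S) ->
  (forall (a : R) u i, g (a *: u) i = a * g u i) ->
  (forall u v i, g (u + v) i = g u i + g v i) ->
  (forall i, exists ws : seq W, forall u, `|g u i| <= \sum_(w <- ws) `|u w|) ->
  seminorm_family sqsum_family.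
Proof.
move=> [S0 FS0] F_fin gZ gD g_fin; split.
- by exists (fun u => Num.sqrt (\sum_(i \in S0) g u i ^+ 2)), S0.
- move=> _ [S /F_fin S_fin <-] a u /=; rewrite !fsbig_finite //.
  under eq_bigr do rewrite gZ exprMn.
  by rewrite -mulr_sumr sqrtrM ?sqr_ge0 // sqrtr_sqr.
- move=> _ [S /F_fin S_fin <-] u v /=; rewrite !fsbig_finite //.
  under eq_bigr do rewrite gD.
  exact: minkowski_sum.
- have seq_dom (s : seq I) : exists ws : seq W, forall u,
      \sum_(i <- s) `|g u i| <= \sum_(w <- ws) `|u w|.
    elim: s => [|i s [ws dom]]; first by exists [::] => u; rewrite !big_nil.
    have [wi dom_i] := g_fin i; exists (wi ++ ws) => u.
    by rewrite big_cons big_cat; apply: lerD.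
  move=> _ [S /F_fin S_fin <-]; have [ws dom] := seq_dom (finmap.enum_fset (fset_set S)).
  exists ws => u /=; rewrite fsbig_finite //.
  exact: le_trans (sqrt_sum_sqr_le_sum_norm _ _) (dom u).
Qed.

End SquareSumFamily.

Lemma norming_sqsum_family_id {W : choiceType} {R : realType} (A : set (set W)) :
  A !=set0 -> (forall S, A S -> finite_set S) -> (forall w, A [set w]) ->
  norming_family (sqsum_family A (fun u : W -> R => u)).
Proof.
move=> A_n0 A_fin A1; split.
  apply: seminorm_sqsum_family => //.
  by move=> w; exists [:: w] => u; rewrite big_seq1.
move=> w; exists (fun u => Num.sqrt (\sum_(i \in [set w]) u i ^+ 2)).
  by exists [set w].
by move=> u; rewrite fsbig_set1 sqrtr_sqr.
Qed.

Section L2.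
Context {W : choiceType} {R : realType}.
Local Notation V := (W -> R).

Definition l2_family : set (V -> R) := sqsum_family (@finite_set W) (fun u => u).
Local Notation l2norm := (sup_norm l2_family).

Lemma norming_l2_family : norming_family l2_family.
Proof. by apply: norming_sqsum_family_id => //; exists set0. Qed.

Lemma l2norm_leP (u : V) (s : R) : 0 <= s ->
  (l2norm u <= s%:E)%E <-> forall S, finite_set S -> \sum_(i \in S) u i ^+ 2 <= s ^+ 2.
Proof.
move=> s_ge0; rewrite sup_norm_leP; split => [le_s S S_fin|le_s _ [S S_fin <-] /=].
  have sum_ge0 : 0 <= \sum_(i \in S) u i ^+ 2 by apply: fsumr_ge0 => i _; exact: sqr_ge0.
  rewrite -(sqr_sqrtr sum_ge0) lerXn2r ?nnegrE ?sqrtr_ge0 //.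
  by apply: (le_s (fun v => Num.sqrt (\sum_(i \in S) v i ^+ 2))); exists S.
by rewrite -(ger0_norm s_ge0) -sqrtr_sqr ler_wsqrtr // le_s.
Qed.

Definition l2_pred : {pred V} := fun u => `[< (l2norm u < +oo)%E >].

Lemma l2_submod_closed : submod_closed l2_pred.
Proof.
split; first by apply/asboolP; rewrite sup_norm0 ?ltry //; exact: norming_l2_family.1.
move=> a u v /asboolP u_fin /asboolP v_fin; apply/asboolP.
have [[r lt_r] [s lt_s]] := (EFin_ub_of_lty u_fin, EFin_ub_of_lty v_fin).
exact: lt_trans (sup_norm_lin_lt norming_l2_family.1 a lt_r lt_s) (ltry _).
Qed.

HB.instance Definition _ := GRing.isSubmodClosed.Build R V l2_pred
  (GRing.submod_closed_semi l2_submod_closed).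

Record l2 := L2 { l2v : V; l2vP : l2v \in l2_pred }.

HB.instance Definition _ := [isSub for l2v].
HB.instance Definition _ := [Choice of l2 by <:].
HB.instance Definition _ := [SubChoice_isSubLmodule of l2 by <:].

Lemma l2v_finite (u : l2) : (l2norm (l2v u) < +oo)%E.
Proof. exact/asboolP/l2vP. Qed.

Definition l2n (u : l2) : R := fine (l2norm (l2v u)).

Lemma l2nE (u : l2) : (l2n u)%:E = l2norm (l2v u).
Proof. by rewrite sup_norm_fineK ?l2v_finite //; exact: norming_l2_family.1. Qed.

Lemma l2n_triangle (u v : l2) : l2n (u + v) <= l2n u + l2n v.
Proof. by rewrite -lee_fin EFinD !l2nE; exact: (sup_normD norming_l2_family.1). Qed.

Lemma l2nZ (a : R) (u : l2) : l2n (a *: u) = `|a| * l2n u.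
Proof. by apply/EFin_inj; rewrite EFinM !l2nE; exact: (sup_normZ norming_l2_family.1). Qed.

Lemma l2n_eq0 (u : l2) : l2n u = 0 -> u = 0.
Proof.
move=> u0; apply: val_inj; apply: (sup_norm_eq0 norming_l2_family).
by rewrite -l2nE u0.
Qed.

HB.instance Definition _ := Lmodule_isNormed.Build R l2 l2n_triangle l2nZ l2n_eq0.

Lemma l2_normE (u : l2) : (`|u|)%:E = l2norm (l2v u).
Proof. exact: l2nE. Qed.

End L2.

Section FiniteSupersets.
Context {T : Type}.

Definition finite_supersets : set_system (set T) :=
  filter_from finite_set (fun S0 => [set S | finite_set S /\ S0 `<=` S]).

#[global] Instance finite_supersets_filter : ProperFilter finite_supersets.
Proof.
apply: filter_from_proper => [|S0 S0_fin]; last by exists S0; split.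
apply: filter_from_filter; first by exists set0.
move=> S1 S2 S1_fin S2_fin; exists (S1 `|` S2); first by rewrite finite_setU.
by move=> S [S_fin sub]; split; split => // x Sx; apply: sub; [left|right].
Qed.

Lemma finite_supersets_finite :
  \forall S \near (finite_supersets : set_system (set T)), finite_set S.
Proof. by exists set0 => // S []. Qed.

End FiniteSupersets.

Section L2Hilbert.
Context {W : choiceType} {R : realType}.
Local Notation V := (W -> R).
Local Notation l2norm := (sup_norm (@l2_family W R)).
Local Notation L := (@l2 W R).

Lemma l2_complete (G : set_system L) : ProperFilter G -> cauchy G -> cvg G.
Proof.
move=> PG /cauchyP G_cauchy.
have l2v_cauchy e : 0 < e -> exists2 B, (l2v @ G) B &
    forall f g, B f -> B g -> (l2norm (f - g)%R < e%:E)%E.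
  move=> e_gt0; have [u0 G_ball] := G_cauchy _ (divr_gt0 e_gt0 (ltr0Sn _ 1)).
  exists (l2v @` ball u0 (e / 2)).
    by apply: (@filterS _ G _ (ball u0 (e / 2))) => // u ball_u; exists u.
  move=> _ _ [u u_ball <-] [v v_ball <-].
  rewrite -[l2v u - l2v v]/(l2v (u - v)) -l2_normE lte_fin.
  rewrite -ball_normE /ball_ /= in u_ball v_ball.
  rewrite -(subrKA u0) (le_lt_trans (ler_normD _ _)) // distrC.
  by rewrite [e]splitr ltrD.
have [x x_lim] := sup_norm_complete norming_l2_family _ l2v_cauchy.
have x_l2 : x \in l2_pred.
  have : G [set u | (l2norm (l2v u - x)%R < 1%:E)%E] := x_lim 1 ltr01.
  move=> /filter_ex [u u_near]; apply/asboolP.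
  rewrite -(subKr (l2v u) x); apply: le_lt_trans (sup_normD norming_l2_family.1 _ _) _.
  rewrite sup_normN; last exact: norming_l2_family.1.
  by rewrite lte_add_pinfty ?(lt_trans u_near) ?ltry ?l2v_finite.
apply/cvg_ex; exists (L2 x_l2); apply/cvgrPdist_lt => e e_gt0.
have : G [set u | (l2norm (l2v u - x)%R < e%:E)%E] := x_lim e e_gt0.
apply: filterS => u /=.
by rewrite -lte_fin l2_normE /= -opprB sup_normN //; exact: norming_l2_family.1.
Qed.

HB.instance Definition _ := Uniform_isComplete.Build L l2_complete.

Lemma l2_sqrt_sum_cvg (u : L) :
  Num.sqrt (\sum_(i \in S) l2v u i ^+ 2) @[S --> finite_supersets] --> `|u|.
Proof.
apply/cvgrPdist_le => e e_gt0.
have : ((`|u| - e)%:E < l2norm (l2v u))%E by rewrite -l2_normE lte_fin gtrDl oppr_lt0.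
move=> /ereal_sup_gtP [_ [_ [S0 S0_fin <-] <-]]; rewrite lte_fin /= => S0_large.
exists S0 => // S [S_fin S0S] /=.
have : ((Num.sqrt (\sum_(i \in S) l2v u i ^+ 2))%:E <= l2norm (l2v u))%E.
  by apply: (sup_norm_ub (p := fun v => Num.sqrt (\sum_(i \in S) v i ^+ 2))); exists S.
rewrite -l2_normE lee_fin => le_norm.
have : Num.sqrt (\sum_(i \in S0) l2v u i ^+ 2) <= Num.sqrt (\sum_(i \in S) l2v u i ^+ 2).
  by apply/ler_wsqrtr/ler_fsum_subset => // i _; exact: sqr_ge0.
rewrite ger0_norm ?subr_ge0 //; lra.
Qed.

Lemma l2_sum_sqr_cvg (u : L) :
  \sum_(i \in S) l2v u i ^+ 2 @[S --> finite_supersets] --> `|u| ^+ 2.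
Proof.
have sqrtK S : \sum_(i \in S) l2v u i ^+ 2 =
    Num.sqrt (\sum_(i \in S) l2v u i ^+ 2) * Num.sqrt (\sum_(i \in S) l2v u i ^+ 2).
  by rewrite -expr2 sqr_sqrtr //; apply: fsumr_ge0 => i _; exact: sqr_ge0.
rewrite (eq_cvg _ _ sqrtK) expr2.
exact: cvgM (l2_sqrt_sum_cvg (u := u)) (l2_sqrt_sum_cvg (u := u)).
Qed.

Definition l2_dot (u v : L) : R := (`|u + v| ^+ 2 - `|u - v| ^+ 2) / 4.

Lemma l2_dot_cvg (u v : L) :
  \sum_(i \in S) l2v u i * l2v v i @[S --> finite_supersets] --> l2_dot u v.
Proof.
apply: cvg_trans _ (cvgMr_tmp (b := 4^-1) (cvgB (l2_sum_sqr_cvg (u := u + v))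
  (l2_sum_sqr_cvg (u := u - v)))).
(* Finite sums over infinite sets are junk values: the identity only holds eventually. *)
apply: near_eq_cvg; apply: filterS finite_supersets_finite => S S_fin /=.
rewrite !fctE !fsbig_finite // -sumrB mulr_suml; apply: eq_bigr => i _ /=.
by rewrite /=; field.
Qed.

Lemma l2_dotDl (a : R) (u v w : L) :
  l2_dot (a *: u + v) w = a * l2_dot u w + l2_dot v w.
Proof.
rewrite -(cvg_lim (@Rhausdorff R) (l2_dot_cvg (u := a *: u + v) (v := w))).
apply: (cvg_lim (@Rhausdorff R)).
apply: cvg_trans _ (cvgD (cvgMl_tmp (a := a) (l2_dot_cvg (u := u) (v := w)))
  (l2_dot_cvg (u := v) (v := w))).
apply: near_eq_cvg; apply: filterS finite_supersets_finite => S S_fin /=.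
rewrite !fctE !fsbig_finite // mulr_sumr -big_split; apply: eq_bigr => i _ /=.
by rewrite mulrDl mulrA.
Qed.

Lemma l2_inner_product : inner_product_of l2_dot.
Proof.
split.
- by move=> u v; rewrite /l2_dot [u + v]addrC [`|u - v|]distrC.
- exact: l2_dotDl.
- move=> u; rewrite /l2_dot subrr normr0 expr0n subr0 -mulr2n normrMn.
  have -> : (`|u| *+ 2) ^+ 2 / 4 = `|u| ^+ 2 by rewrite -mulr_natr; field.
  by rewrite sqrtr_sqr normr_id.
Qed.

Lemma l2_sum_sqr_le (u : L) S : finite_set S ->
  \sum_(i \in S) l2v u i ^+ 2 <= `|u| ^+ 2.
Proof. by move: S; apply/l2norm_leP; rewrite ?normr_ge0 // -l2_normE. Qed.

Lemma l2_finite_support (y : V) : finite_set [set w | y w != 0] -> (l2norm y < +oo)%E.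
Proof.
set K := [set w | y w != 0] => K_fin.
have /l2norm_leP le_K : 0 <= Num.sqrt (\sum_(i \in K) y i ^+ 2) by exact: sqrtr_ge0.
apply: le_lt_trans (ltry (Num.sqrt (\sum_(i \in K) y i ^+ 2))); apply/le_K => S S_fin.
rewrite sqr_sqrtr; last by apply: fsumr_ge0 => i _; exact: sqr_ge0.
rewrite (fsbigID K _ _ S_fin) /= [X in _ + X]fsbig1 ?addr0.
  by apply: ler_fsum_subset => // i _; exact: sqr_ge0.
by move=> i [_ /negP]; rewrite negbK => /eqP ->; rewrite expr0n.
Qed.

Lemma l2_finite_support_dense (u : L) (e : R) : 0 < e ->
  exists y : V, finite_set [set w | y w != 0] /\ (l2norm (l2v u - y)%R < e%:E)%E.
Proof.
move=> e_gt0; have /cvgrPdist_lt /(_ ((e / 2) ^+ 2)) := l2_sum_sqr_cvg (u := u).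
case=> [|S0 S0_fin /(_ S0 (conj S0_fin (@subset_refl _ S0))) /= S0_large].
  by rewrite exprn_gt0 // divr_gt0.
pose y w := if w \in S0 then l2v u w else 0.
exists y; split.
  apply: sub_finite_set S0_fin => w /=; rewrite /y.
  by case: ifPn => [/set_mem|] //; rewrite eqxx.
apply: (@le_lt_trans _ _ (e / 2)%:E); last by rewrite lte_fin; lra.
apply/l2norm_leP => [|S S_fin]; first by rewrite divr_ge0 // ltW.
have SS0_fin : finite_set (S `|` S0) by rewrite finite_setU.
have split_S0 (f : W -> R) : \sum_(i \in S `|` S0) f i =
    \sum_(i \in S0) f i + \sum_(i \in (S `|` S0) `&` ~` S0) f i.
  by rewrite (fsbigID S0 _ _ SS0_fin) setIidr //; exact: subsetUr.
have u_le := l2_sum_sqr_le u SS0_fin; rewrite split_S0 in u_le.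
apply: (@le_trans _ _ (\sum_(i \in S `|` S0) (l2v u i - y i) ^+ 2)).
  by apply: ler_fsum_subset => // i _; exact: sqr_ge0.
rewrite split_S0 fsbig1 ?add0r => [|i S0i]; last by rewrite /y mem_set // subrr expr0n.
have -> : \sum_(i \in (S `|` S0) `&` ~` S0) (l2v u i - y i) ^+ 2 =
    \sum_(i \in (S `|` S0) `&` ~` S0) l2v u i ^+ 2.
  apply: eq_fsbigr => i /set_mem [_ nS0i].
  by rewrite /y ifF ?subr0 //; apply/negP => /set_mem.
by move: S0_large; rewrite ltr_distlC => /andP[+ _]; lra.
Qed.

End L2Hilbert.

Section C00Closure.
Context {d : Order.disp_t} {W : orderType d} {R : realType}.
Local Notation V := (W -> R).

Definition c00_closure (N : V -> \bar R) : set V :=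
  [set x | (N x < +oo)%E /\
     forall eps : R, 0 < eps -> exists y, c00 y /\ (N (x - y)%R < eps%:E)%E].

Lemma c00_lin (a : R) (x y : V) : c00 x -> c00 y -> c00 (a *: x + y).
Proof.
move=> x_fin y_fin.
apply: (@sub_finite_set _ _ ([set w | x w != 0] `|` [set w | y w != 0])).
  move=> w; rewrite /= !fctE => nz; have [x0|] := eqVneq (x w) 0; last by left.
  by right; apply: contraNneq nz => y0; rewrite x0 y0 scaler0 addr0.
by rewrite finite_setU.
Qed.

Section Banach.
Variables (P : set (V -> R)) (P_norm : norming_family P).
Local Notation N := (sup_norm P).
Let P_semi := P_norm.1.

Lemma c00_closure_lin (a : R) x y :
  c00_closure N x -> c00_closure N y -> c00_closure N (a *: x + y).
Proof.
move=> [x_fin x_appr] [y_fin y_appr]; split.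
  have [[r lt_r] [s lt_s]] := (EFin_ub_of_lty x_fin, EFin_ub_of_lty y_fin).
  exact: lt_trans (sup_norm_lin_lt P_semi a lt_r lt_s) (ltry _).
move=> eps eps_gt0; have eps2_gt0 := divr_gt0 eps_gt0 (ltr0Sn _ 1).
have a1_gt0 : 0 < `|a| + 1 by rewrite ltr_wpDl.
have [x' [x'_c00 x'_near]] := x_appr _ (divr_gt0 eps2_gt0 a1_gt0).
have [y' [y'_c00 y'_near]] := y_appr _ eps2_gt0.
exists (a *: x' + y'); split; first exact: c00_lin.
have -> : a *: x + y - (a *: x' + y') = a *: (x - x') + (y - y').
  by rewrite scalerBr addrACA opprD.
apply: lt_le_trans (sup_norm_lin_lt P_semi a x'_near y'_near) _.
have le_half : `|a| * (eps / 2 / (`|a| + 1)) <= eps / 2.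
  by rewrite mulrCA ger_pMr // ler_pdivrMr // mul1r lerDl.
by rewrite lee_fin [leRHS]splitr lerD2r.
Qed.

Lemma c00_closure_complete (u : nat -> V) :
  (forall n, c00_closure N (u n)) ->
  (forall eps : R, 0 < eps -> exists M, forall m n, (M <= m)%N -> (M <= n)%N ->
    (N (u m - u n)%R < eps%:E)%E) ->
  exists x, c00_closure N x /\ forall eps : R, 0 < eps -> exists M, forall n,
    (M <= n)%N -> (N (u n - x)%R < eps%:E)%E.
Proof.
move=> u_closure u_cauchy.
have [x x_lim] : exists x, forall eps : R, 0 < eps ->
    (u @ \oo) [set v | (N (v - x)%R < eps%:E)%E].
  apply: (sup_norm_complete P_norm) => eps eps_gt0.
  have [M M_cauchy] := u_cauchy eps eps_gt0.
  exists [set u m | m in [set m | (M <= m)%N]]; first by exists M => // n; exists n.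
  by move=> _ _ [m Mm <-] [n Mn <-]; exact: M_cauchy.
have x_lim_nat eps : 0 < eps ->
    exists M, forall n, (M <= n)%N -> (N (u n - x)%R < eps%:E)%E.
  by move=> /x_lim [M _ M_lim]; exists M => n /M_lim.
exists x; split => //.
have lt_x_sub v M e r : (N (u M - x)%R < e%:E)%E -> (N (u M - v)%R < r%:E)%E ->
    (N (x - v)%R < (e + r)%:E)%E.
  move=> lt_e lt_r; have := sup_norm_lin_lt P_semi (-1) lt_e lt_r.
  by rewrite normrN normr1 mul1r scaleN1r opprB addrA subrK.
split.
  have [M M_lim] := x_lim_nat _ ltr01; have [r lt_r] := EFin_ub_of_lty (u_closure M).1.
  have := lt_x_sub 0 M 1 r (M_lim M (leqnn M)); rewrite !subr0 => /(_ lt_r) lt_x.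
  exact: lt_trans lt_x (ltry _).
move=> eps eps_gt0; have eps2_gt0 := divr_gt0 eps_gt0 (ltr0Sn _ 1).
have [M M_lim] := x_lim_nat _ eps2_gt0.
have [y [y_c00 y_near]] := (u_closure M).2 _ eps2_gt0.
by exists y; split => //; rewrite [eps]splitr; exact: lt_x_sub (M_lim M (leqnn _)) y_near.
Qed.

Theorem banach_c00_closure : banach_subspace N (c00_closure N).
Proof.
split.
  split; first by rewrite sup_norm0 ?ltry.
  move=> eps eps_gt0; exists 0; split.
    by apply: sub_finite_set (finite_set0 W) => w /=; rewrite eqxx.
  by rewrite subr0 sup_norm0 ?lte_fin.
split; first by move=> a x y xX yX; exact: (c00_closure_lin a xX yX).
split; first by move=> x [].
split; first by move=> x _ /(sup_norm_eq0 P_norm) -> w.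
split; first by move=> a x _; exact: (sup_normZ P_semi).
split; first by move=> x y _ _; exact: (sup_normD P_semi).
exact: c00_closure_complete.
Qed.

End Banach.
End C00Closure.

Section HilbertGenerated.
Context {d : Order.disp_t} {W : orderType d} {R : realType}.
Local Notation V := (W -> R).
Local Notation l2norm := (sup_norm (@l2_family W R)).

Theorem hilbert_generated_c00_closure (N : V -> \bar R) (C : R) :
  (forall u s, (l2norm u <= s%:E)%E -> (N u <= (C * s)%:E)%E) ->
  hilbert_generated N (c00_closure N).
Proof.
move=> N_le; exists (@l2 W R), l2_dot; split; first exact: l2_inner_product.
have N_l2 (u : l2) : (N (l2v u) <= (C * `|u|)%:E)%E by apply: N_le; rewrite -l2_normE.
exists l2v; split => //.
- by exists C.
- move=> u; split; first exact: le_lt_trans (N_l2 u) (ltry _).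
  move=> eps eps_gt0; have C1_gt0 : 0 < `|C| + 1 by rewrite ltr_wpDl.
  have [y [y_fin y_near]] := l2_finite_support_dense u (divr_gt0 eps_gt0 C1_gt0).
  exists y; split => //; apply: le_lt_trans (N_le _ _ (ltW y_near)) _.
  rewrite lte_fin (le_lt_trans (ler_norm _)) // normrM.
  rewrite [`|_ / _|]ger0_norm ?divr_ge0 ?ltW //.
  by rewrite mulrCA gtr_pMr // ltr_pdivrMr // mul1r ltrDl.
- move=> x [_ x_appr] eps eps_gt0; have [y [y_c00 y_near]] := x_appr eps eps_gt0.
  by exists (L2 (asboolT (l2_finite_support y_c00))).
Qed.

End HilbertGenerated.

Section ConsecutivePairs.
Context {d : Order.disp_t} {W : orderType d} {R : realType}.
Variables (P : set (W * W)) (P_cons : consecutive_pairs P).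

Lemma consecutive_pairs_fst_inj : set_inj P fst.
Proof.
have [lt12 sep] := P_cons.
move=> p q /set_mem Pp /set_mem Pq eq1; apply: contrapT => npq.
have := lt12 p Pp; have := lt12 q Pq.
by case: (sep p q Pp Pq npq) => lt_pq lt_q lt_p;
  [move: (lt_trans lt_p lt_pq) | move: (lt_trans lt_q lt_pq)]; rewrite eq1 ltxx.
Qed.

Lemma consecutive_pairs_snd_inj : set_inj P snd.
Proof.
have [lt12 sep] := P_cons.
move=> p q /set_mem Pp /set_mem Pq eq2; apply: contrapT => npq.
have := lt12 p Pp; have := lt12 q Pq.
by case: (sep p q Pp Pq npq) => lt_pq lt_q lt_p;
  [move: (lt_trans lt_pq lt_q) | move: (lt_trans lt_pq lt_p)]; rewrite eq2 ltxx.
Qed.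

Lemma consecutive_pairs_fst_snd_disjoint : fst @` P `&` snd @` P = set0.
Proof.
have [lt12 sep] := P_cons.
apply/seteqP; split => // x [[p Pp <-] [q Pq eq_qp]].
have [qp|npq] := pselect (q = p); first by move: (lt12 q Pq); rewrite eq_qp qp ltxx.
case: (sep q p Pq Pp npq) => lt_qp; first by move: lt_qp; rewrite eq_qp ltxx.
by move: (lt_trans (lt_trans (lt12 p Pp) lt_qp) (lt12 q Pq)); rewrite eq_qp ltxx.
Qed.

Lemma sum_sqr_consecutive_pairs (f : W -> R) : finite_set P ->
  \sum_(p \in P) (f p.1 - f p.2) ^+ 2 <=
  2 * \sum_(w \in fst @` P `|` snd @` P) f w ^+ 2.
Proof.
move=> P_fin; have [fst_fin snd_fin] := (finite_image fst P_fin, finite_image snd P_fin).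
rewrite fsbigU //=; last by rewrite consecutive_pairs_fst_snd_disjoint.
rewrite (fsbig_image _ _ _ consecutive_pairs_fst_inj).
rewrite (fsbig_image _ _ _ consecutive_pairs_snd_inj).
rewrite mulrDr !mulr_fsumr -fsbig_split // !fsbig_finite //.
apply: ler_sum => p _ /=; rewrite -subr_ge0.
have -> : 2 * f p.1 ^+ 2 + 2 * f p.2 ^+ 2 - (f p.1 - f p.2) ^+ 2 = (f p.1 + f p.2) ^+ 2.
  by ring.
exact: sqr_ge0.
Qed.

End ConsecutivePairs.

Lemma exists_lt_of_uncountable {d : Order.disp_t} (W : orderType d) :
  ~ countable [set: W] -> exists a b : W, (a < b)%O.
Proof.
move=> W_unc; apply: contrapT => no_lt; apply/W_unc/finite_set_countable.
have [[w0 _]|W0] := pselect (exists w : W, True); last first.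
  by apply: sub_finite_set (finite_set0 W) => w _; apply: W0; exists w.
apply: sub_finite_set (finite_set1 w0) => w _ /=.
have [lt_w|lt_w|] := ltgtP w w0 => //; exfalso; apply: no_lt.
  by exists w, w0.
by exists w0, w.
Qed.

Section NormAD.
Context {d : Order.disp_t} {W : orderType d} {R : realType}.
Local Notation V := (W -> R).
Local Notation l2norm := (sup_norm (@l2_family W R)).
Variables (A : set (set W)) (D : set (set (W * W))).
Hypotheses (A_fin : forall S, A S -> finite_set S) (A1 : forall w, A [set w])
  (D_cons : forall P, D P -> finite_set P /\ consecutive_pairs P).

Definition pair_differences (u : V) (p : W * W) : R := u p.1 - u p.2.

Lemma seminorm_pair_differences :
  D !=set0 -> seminorm_family (sqsum_family D pair_differences).
Proof.
move=> D_n0; apply: seminorm_sqsum_family => //.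
- by move=> P /D_cons [].
- by move=> a u p; rewrite /pair_differences -mulrBr.
- by move=> u v p; rewrite /pair_differences opprD addrACA.
- by move=> p; exists [:: p.1; p.2] => u; rewrite big_cons big_seq1 ler_normB.
Qed.

Lemma normA_sup_norm (u : V) : normA A u = sup_norm (sqsum_family A (fun v => v)) u.
Proof. by rewrite sup_norm_sqsum_family. Qed.

Lemma nuD_sup_norm (u : V) : nuD D u = sup_norm (sqsum_family D pair_differences) u.
Proof. by rewrite sup_norm_sqsum_family. Qed.

Lemma normA_le_l2 (u : V) : (normA A u <= l2norm u)%E.
Proof.
rewrite normA_sup_norm; apply: le_sup_norm => _ [S /A_fin S_fin <-].
by exists S.
Qed.

Lemma nuD_le_l2 (u : V) (s : R) : (l2norm u <= s%:E)%E ->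
  (nuD D u <= (2 * s)%:E)%E.
Proof.
move=> le_s; have s_ge0 : 0 <= s.
  by rewrite -lee_fin (le_trans _ le_s) // sup_norm_ge0 //; exact: norming_l2_family.1.
have /(l2norm_leP _ s_ge0) sum_le := le_s.
rewrite nuD_sup_norm.
apply/sup_norm_leP => _ [P /D_cons [P_fin P_cons] <-] /=.
rewrite -(ger0_norm (mulr_ge0 (ler0n _ 2) s_ge0)) -sqrtr_sqr; apply: ler_wsqrtr.
apply: le_trans (sum_sqr_consecutive_pairs P_cons u P_fin) _.
have ends_fin : finite_set (fst @` P `|` snd @` P).
  by rewrite finite_setU; split; exact: finite_image.
have := sum_le _ ends_fin; nra.
Qed.

Lemma normAD_le_l2 (u : V) (s : R) : (l2norm u <= s%:E)%E ->
  (normAD A D u <= (3 * s)%:E)%E.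
Proof.
move=> le_s; have -> : 3 * s = 2 * s + s by ring.
rewrite /normAD EFinD.
exact: leeD (nuD_le_l2 le_s) (le_trans (normA_le_l2 u) le_s).
Qed.

Lemma normAD_sup_norm : D !=set0 -> A !=set0 -> normAD A D =
  sup_norm (sum_family (sqsum_family D pair_differences) (sqsum_family A (fun u => u))).
Proof.
move=> D_n0 A_n0; apply/funext => u.
have PA_norm := norming_sqsum_family_id (R := R) A_n0 A_fin A1.
rewrite (sup_norm_sum_family u (seminorm_pair_differences D_n0) PA_norm.1).
by rewrite /normAD nuD_sup_norm normA_sup_norm.
Qed.

End NormAD.

Theorem proposition2p6 (d : Order.disp_t) (W : orderType d) (R : realType)
  (A : set (set W)) (D : set (set (W * W))) :
  is_omega1 W ->
  (forall S, A S -> finite_set S) ->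
  (forall S T, A S -> T `<=` S -> A T) ->
  (forall a : W, A [set a]) ->
  (forall P, D P -> finite_set P /\ consecutive_pairs P) ->
  (forall a b : W, (a < b)%O -> D [set (a, b)]) ->
  banach_subspace (@normAD _ W R A D) (@XAD _ W R A D) /\
  hilbert_generated (@normAD _ W R A D) (@XAD _ W R A D).
Proof.
move=> [_ W_unc _] A_fin _ A1 D_cons D2.
have [a [b lt_ab]] := exists_lt_of_uncountable W_unc.
have D_n0 : D !=set0 by exists [set (a, b)]; exact: D2.
have A_n0 : A !=set0 by exists [set a].
split; last exact: hilbert_generated_c00_closure (normAD_le_l2 A_fin D_cons).
change (banach_subspace (@normAD _ W R A D) (c00_closure (@normAD _ W R A D))).
rewrite (normAD_sup_norm A_fin A1 D_cons D_n0 A_n0).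
apply/banach_c00_closure/norming_sum_family; first exact: seminorm_pair_differences.
exact: norming_sqsum_family_id.
Qed.
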